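(* Let $R$ be a commutative ring with identity, let $(S,\leq)$ be a strictly ordered monoid, and suppose $S=S_1\sqcup S_2$ is a disjoint union of subsets. Define the $R$-linear map $P:R\,S\to R\,S$ on the monoid algebra by $P(x)=x$ for $x\in S_1$ and $P(x)=0$ for $x\in S_2$, and define $\widehat{P}:[[R^{S,\leq}]]\to[[R^{S,\leq}]]$ by $\widehat{P}(f)(s)=f(s)$ for $s\in S_1$ and $\widehat{P}(f)(s)=0$ for $s\in S_2$. Then $P$ is a Rota-Baxter operator (of weight $-1$) on $R\,S$ if and only if $\widehat{P}$ is a Rota-Baxter operator (of weight $-1$) on $[[R^{S,\leq}]]$.
   Context: All monoids are commutative and written additively with neutral element $0$. A partially ordered set is artinian if every strictly decreasing sequence is finite, and narrow if every subset of pairwise incomparable elements is finite. A strictly ordered monoid is a commutative monoid $S$ with a partial order $\leq$ such that $s<s'$ implies $s+t<s'+t$ for all $s,s',t\in S$. The ring of generalized power series $[[R^{S,\leq}]]$ is the set of maps $f:S\to R$ with artinian and narrow support $\{s: f(s)\neq 0\}$, with pointwise addition and convolution $(fg)(s)=\sum f(u)g(v)$ over the finitely many pairs $(u,v)$ with $u+v=s$, $f(u)\neq0$, $g(v)\neq0$. A Rota-Baxter operator of weight $-1$ on an associative $R$-algebra $A$ is an $R$-linear $P:A\to A$ with $P(x)P(y)=P(xP(y))+P(P(x)y)-P(xy)$ for all $x,y\in A$. *)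

From HB Require Import structures.
From mathcomp Require Import all_boot all_order all_algebra.
From mathcomp Require Import boolp classical_sets cardinality fsbigop.
Set Implicit Arguments. Unset Strict Implicit. Unset Printing Implicit Defensive.
Import GRing.Theory.
Local Open Scope classical_set_scope.
Local Open Scope ring_scope.

(* The commutative monoid S is an nmodType (written additively, neutral 0);
   its partial order is an explicit relation [le]. *)

Definition strictly_ordered_monoid (S : nmodType) (le : S -> S -> Prop) :=
  [/\ (forall x, le x x),
      (forall x y, le x y -> le y x -> x = y),
      (forall x y z, le x y -> le y z -> le x z) &
      (forall s s' t, le s s' /\ s <> s' -> le (s + t) (s' + t) /\ s + t <> s' + t)].

Definition fsupport (S : Type) (R : nmodType) (f : S -> R) : set S :=
  [set s | f s != 0].

Definition artinian (S : Type) (le : S -> S -> Prop) (A : set S) :=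
  ~ exists a : nat -> S, forall n, A (a n) /\ le (a n.+1) (a n) /\ a n.+1 <> a n.

Definition narrow (S : Type) (le : S -> S -> Prop) (A : set S) :=
  forall B : set S, B `<=` A ->
    (forall x y, B x -> B y -> x <> y -> ~ le x y /\ ~ le y x) -> finite_set B.

(* carrier of the monoid algebra R S: finitely supported functions *)
Definition monoid_alg (S : Type) (R : nmodType) (f : S -> R) :=
  finite_set (fsupport f).

(* carrier of the generalized power series ring [[R^{S,<=}]] *)
Definition gps (S : Type) (R : nmodType) (le : S -> S -> Prop) (f : S -> R) :=
  artinian le (fsupport f) /\ narrow le (fsupport f).

(* convolution product: (fg)(s) = sum of f(u) g(v) over u+v=s, f(u)<>0, g(v)<>0
   (this index set is finite on both carriers above) *)
Definition conv (S : nmodType) (R : comPzRingType) (f g : S -> R) : S -> R :=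
  fun s => \sum_(p \in [set p : S * S | p.1 + p.2 = s /\ f p.1 != 0 /\ g p.2 != 0])
             (f p.1 * g p.2).

(* Rota-Baxter operator of weight -1 on the R-algebra whose carrier is the
   set of functions satisfying A, with multiplication mul *)
Definition rota_baxter_op (S : Type) (R : comPzRingType) (A : (S -> R) -> Prop)
    (mul : (S -> R) -> (S -> R) -> S -> R) (P : (S -> R) -> S -> R) :=
  [/\ (forall x, A x -> A (P x)),
      (forall (a : R) x y, A x -> A y ->
          P (fun s => a * x s + y s) = (fun s => a * P x s + P y s)) &
      (forall x y, A x -> A y ->
          mul (P x) (P y) =
          (fun s => P (mul x (P y)) s + P (mul (P x) y) s - P (mul x y) s))].

Definition proj12 (S : Type) (R : nmodType) (S1 S2 : set S) (f : S -> R) : S -> R :=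
  fun s => if `[< S1 s >] then f s else 0.

From HB Require Import structures.
From mathcomp Require Import all_boot all_order all_algebra.
From mathcomp Require Import boolp classical_sets cardinality fsbigop functions.
Set Implicit Arguments. Unset Strict Implicit. Unset Printing Implicit Defensive.
Local Open Scope classical_set_scope.

(* Restriction to S1 is linear and preserves both carriers, so only the
   Rota-Baxter identity has to be transferred. Finitely supported functions are
   generalized power series, which gives one direction. Conversely, the value at
   w of each product in the identity only involves the pairs (u, v) with
   u + v = w, f u <> 0 and g v <> 0. Supports are artinian and narrow, so any
   sequence of such pairs has indices i < j increasing in both coordinates, which
   strict monotonicity of addition forbids for distinct pairs with the same sum:
   there are finitely many pairs, and truncating x and y to their coordinates
   reduces the identity at w to the one for finitely supported functions. *)

Lemma dependent_choice (T : Type) (Q : T -> Prop) (step : T -> T -> Prop) x0 :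
  Q x0 -> (forall x, Q x -> exists y, Q y /\ step x y) ->
  exists f : nat -> T, f 0%N = x0 /\ forall n, Q (f n) /\ step (f n) (f n.+1).
Proof.
move=> Q0 Hstep.
have next : forall x : {x | Q x}, {y : {x | Q x} | step (sval x) (sval y)}.
  by move=> [x Qx]; have /cid [y [Qy xy]] := Hstep x Qx; exists (exist _ y Qy).
pose h n := iter n (fun x => sval (next x)) (exist _ x0 Q0).
exists (fun n => sval (h n)); split=> // n; split; first exact: svalP (h n).
exact: svalP (next (h n)).
Qed.

Lemma infinite_set_inj_seq (T : choiceType) (X : set T) : infinite_set X ->
  exists h : nat -> T, (forall n, X (h n)) /\ injective h.
Proof.
move=> /infiniteP/card_leP[e].
exists (fun n => val (e (exist _ n (in_setT n)))); split=> [n|n m].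
  exact: set_valP.
by move=> /val_inj /(@inj _ _ _ e) H; move: (H (in_setT _) (in_setT _)) => [].
Qed.

Section PartialWellOrder.
Variables (S : Type) (le : S -> S -> Prop).
Hypothesis le_refl : forall x, le x x.
Hypothesis le_trans : forall x y z, le x y -> le y z -> le x z.

Lemma artinian_sub (A B : set S) : B `<=` A -> artinian le A -> artinian le B.
Proof. by move=> BA artA [a Ha]; apply: artA; exists a => n; have [/BA] := Ha n. Qed.

Lemma narrow_sub (A B : set S) : B `<=` A -> narrow le A -> narrow le B.
Proof. by move=> BA narA C CB; apply: narA => x /CB /BA. Qed.

Lemma artinian_minimal_below (A Y : set S) y : artinian le A -> Y `<=` A -> Y y ->
  exists m, [/\ Y m, le m y & forall z, Y z -> le z m -> z = m].
Proof.
move=> artA YA Yy; apply: contrapT => nomin; apply: (artinian_sub YA artA).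
have descend x : Y x /\ le x y -> exists x', (Y x' /\ le x' y) /\ (le x' x /\ x' <> x).
  move=> [Yx xy]; apply: contrapT => nodesc; apply: nomin; exists x; split=> // z Yz zx.
  by apply: contrapT => zx'; apply: nodesc; exists z; split; split=> //; apply: le_trans xy.
have [f [_ Hf]] := dependent_choice (conj Yy (le_refl y)) descend.
by exists f => n; have [[Yfn _] ?] := Hf n.
Qed.

(* Minimal elements of [a @` I] form an antichain, hence are finitely many, and
   every [a j] lies above one of them. *)
Lemma pwo_good_index (A : set S) (a : nat -> S) (I : set nat) :
  artinian le A -> narrow le A -> (forall n, A (a n)) -> infinite_set I ->
  exists i, I i /\ infinite_set [set j | I j /\ (i < j)%N /\ le (a i) (a j)].
Proof.
move=> artA narA Aa infI; apply: contrapT => nogood.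
have finAbove i : I i -> finite_set [set j | I j /\ (i < j)%N /\ le (a i) (a j)].
  by move=> Ii; apply: contrapT => infi; apply: nogood; exists i.
have YA : a @` I `<=` A by move=> _ [n _ <-].
pose M := [set m | (a @` I) m /\ forall z, (a @` I) z -> le z m -> z = m].
have finM : finite_set M.
  apply: narA => [m [Ym _]|x y [Yx minx] [Yy miny] xy]; first exact: YA.
  by split=> xley; apply: xy; [apply: miny | apply/esym/minx].
apply: infI.
apply: (sub_finite_set (B := \bigcup_(m in M) [set j | I j /\ le m (a j)])).
  move=> j Ij; have [m [Ym mj minm]] := artinian_minimal_below artA YA (imageP a Ij).
  by exists m.
apply: bigcup_finite => // m [[i Ii <-] _].
apply: (sub_finite_set (B := [set j | I j /\ (i < j)%N /\ le (a i) (a j)] `|` `I_i.+1)).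
  by move=> j [Ij aij]; case: (ltnP i j) => ij; [left | right].
by rewrite finite_setU; split; [exact: finAbove | exact: finite_II].
Qed.

Lemma pwo_ascending_subseq (A : set S) (a : nat -> S) :
  artinian le A -> narrow le A -> (forall n, A (a n)) ->
  exists phi : nat -> nat,
    forall n m, (n < m)%N -> (phi n < phi m)%N /\ le (a (phi n)) (a (phi m)).
Proof.
move=> artA narA Aa.
pose Q (x : nat * set nat) :=
  infinite_set x.2 /\ forall j, x.2 j -> (x.1 < j)%N /\ le (a x.1) (a j).
pose refine (x y : nat * set nat) := x.2 y.1 /\ y.2 `<=` x.2.
have good_state I : infinite_set I ->
    exists i, I i /\ Q (i, [set j | I j /\ (i < j)%N /\ le (a i) (a j)]).
  move=> infI; have [i [Ii infi]] := pwo_good_index artA narA Aa infI.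
  by exists i; split=> //; split=> // j [].
have [i0 [_ Q0]] := good_state _ infinite_nat.
have step x : Q x -> exists y, Q y /\ refine x y.
  case: x => i I [infI _]; have [i' [Ii' Qi']] := good_state _ infI.
  exists (i', [set j | I j /\ (i' < j)%N /\ le (a i') (a j)]).
  by split=> //; split=> // j [].
have [f [_ Hf]] := dependent_choice Q0 step.
have nested n k : (f (n + k)%N).2 `<=` (f n).2.
  elim: k => [|k IH]; first by rewrite addn0.
  by rewrite addnS => j /(proj2 (proj2 (Hf _))) /IH.
exists (fun n => (f n).1) => n m nm; apply: (proj2 (proj1 (Hf n))).
rewrite -(subnKC nm) addSn; apply: nested (proj1 (proj2 (Hf _))).
Qed.

Lemma pwo_good_pair2 (A B : set S) (a b : nat -> S) :
  artinian le A -> narrow le A -> artinian le B -> narrow le B ->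
  (forall n, A (a n)) -> (forall n, B (b n)) ->
  exists i j, [/\ (i < j)%N, le (a i) (a j) & le (b i) (b j)].
Proof.
move=> artA narA artB narB Aa Bb.
have [phi Hphi] := pwo_ascending_subseq artA narA Aa.
have [psi Hpsi] := pwo_ascending_subseq artB narB (fun n => Bb (phi n)).
have [psi01 bpsi] := Hpsi 0%N 1%N isT.
have [phi01 aphi] := Hphi _ _ psi01.
by exists (phi (psi 0%N)), (phi (psi 1%N)).
Qed.
End PartialWellOrder.

Import GRing.Theory.
Local Open Scope ring_scope.

Definition conv_support (S : nmodType) (R : nmodType) (f g : S -> R) (w : S) :=
  [set p : S * S | p.1 + p.2 = w /\ f p.1 != 0 /\ g p.2 != 0].

Section StrictlyOrderedMonoid.
Variables (S : nmodType) (le : S -> S -> Prop).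
Hypothesis som : strictly_ordered_monoid le.

Lemma som_addr_le (u u' t : S) : le u u' -> le (u + t) (u' + t).
Proof.
have [le_refl _ _ le_lt] := som.
move=> uu; have [-> | /eqP neq] := eqVneq u u'; first exact: le_refl.
by have [] := le_lt _ _ t (conj uu neq).
Qed.

Lemma som_add_neq (u u' v v' : S) :
  le u u' -> le v v' -> (u, v) <> (u', v') -> u + v <> u' + v'.
Proof.
have [_ le_anti _ le_lt] := som.
move=> uu vv; have [<- neqv | /eqP nequ _] := eqVneq u u'.
  have neq : v <> v' by move=> ev; apply: neqv; rewrite ev.
  by have [_] := le_lt _ _ u (conj vv neq); rewrite ![_ + u]addrC.
have [le_uv neq_uv] := le_lt _ _ v (conj uu nequ).
have le_vv' : le (u' + v) (u' + v') by rewrite ![u' + _]addrC; exact: som_addr_le.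
by move=> e; apply: neq_uv; apply: le_anti => //; rewrite e.
Qed.

Variable R : nmodType.

(* Two distinct pairs on the antidiagonal of [w] can never be a good pair for
   the coordinatewise order, by strict monotonicity of addition. *)
Lemma gps_conv_support_finite (f g : S -> R) w :
  gps le f -> gps le g -> finite_set (conv_support f g w).
Proof.
have [le_refl _ le_trans _] := som.
move=> [artf narf] [artg narg]; apply: contrapT => /infinite_set_inj_seq [h [Xh hinj]].
have [i [j [ij aij bij]]] := pwo_good_pair2 le_refl le_trans artf narf artg narg
  (a := fun n => (h n).1) (b := fun n => (h n).2)
  (fun n => proj1 (proj2 (Xh n))) (fun n => proj2 (proj2 (Xh n))).
have hij : h i <> h j by move=> /hinj /eqP; rewrite ltn_eqF.
apply: (som_add_neq aij bij); first by case: (h i) (h j) hij => ? ? [].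
by rewrite (proj1 (Xh i)) (proj1 (Xh j)).
Qed.

Lemma monoid_alg_gps (f : S -> R) : monoid_alg f -> gps le f.
Proof.
have [le_refl le_anti le_trans _] := som.
move=> finf; split; last by move=> B Bf _; apply: sub_finite_set Bf finf.
move=> [a Ha]; apply: infinite_nat.
have le_shift n k : le (a (n + k)%N) (a n).
  elim: k => [|k IH]; first by rewrite addn0.
  by rewrite addnS; apply: le_trans IH; have [_ []] := Ha (n + k)%N.
have ainj : injective a.
  suff neq n m : (n < m)%N -> a m <> a n.
    by move=> n m e; case: (ltngtP n m) => // /neq; [move/(_ (esym e)) | move/(_ e)].
  move=> nm amn; have [_ [le_n1 neq_n1]] := Ha n; apply: neq_n1; apply: le_anti => //.
  by rewrite -amn -(subnKC nm); exact: le_shift.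
rewrite -(eq_finite_set (inj_card_eq (in2W ainj))).
by apply: sub_finite_set finf => _ [n _ <-]; have [] := Ha n.
Qed.
End StrictlyOrderedMonoid.

Lemma rota_baxter_op_sub (S : Type) (R : comPzRingType) (A B : (S -> R) -> Prop)
    (mul : (S -> R) -> (S -> R) -> S -> R) (P : (S -> R) -> S -> R) :
  (forall x, A x -> B x) -> (forall x, A x -> A (P x)) ->
  rota_baxter_op B mul P -> rota_baxter_op A mul P.
Proof. by move=> AB PA [_ Plin rb_id]; split=> // [a|] x y /AB Bx /AB By; auto. Qed.

Section Restriction.
Variables (S : nmodType) (R : comPzRingType).
Local Notation restr A := (patch (fun=> (0 : R)) A).

Lemma fsupport_patch0 (A : set S) (f : S -> R) :
  fsupport (restr A f) `<=` fsupport f `&` A.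
Proof.
by move=> s; rewrite /fsupport /patch /=; case: ifP => [/set_mem | _]; rewrite ?eqxx.
Qed.

Lemma patch0_lin (A : set S) (a : R) (x y : S -> R) :
  restr A (fun s => a * x s + y s) = (fun s => a * restr A x s + restr A y s).
Proof. by apply/funext => s; rewrite /patch; case: ifP; rewrite ?mulr0 ?addr0. Qed.

Lemma patch0E (A : set S) (h : S -> R) s : restr A h s = if s \in A then h s else 0.
Proof. by []. Qed.

Lemma patchC0 (A B : set S) (f : S -> R) : restr A (restr B f) = restr B (restr A f).
Proof. by rewrite -!patch_setI setIC. Qed.

Lemma conv_patch (A B : set S) (F G : S -> R) w :
  (forall p, conv_support F G w p -> A p.1 /\ B p.2) ->
  conv (restr A F) (restr B G) w = conv F G w.
Proof.
move=> AB; have patchF p : conv_support F G w p -> restr A F p.1 = F p.1.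
  by move=> /AB [Ap _]; rewrite /patch mem_set.
have patchG p : conv_support F G w p -> restr B G p.2 = G p.2.
  by move=> /AB [_ Bp]; rewrite /patch mem_set.
have supp_eq : conv_support (restr A F) (restr B G) w = conv_support F G w.
  apply/seteqP; split=> p Xp; last by rewrite /conv_support /= patchF ?patchG.
  by have [e [/fsupport_patch0 [nzF _] /fsupport_patch0 [nzG _]]] := Xp.
rewrite /conv (eq_fsbigl _ _ _ supp_eq).
by apply: eq_fsbigr => p /set_mem Xp; rewrite patchF ?patchG.
Qed.

Lemma monoid_alg_patch0 (A : set S) (f : S -> R) : monoid_alg f -> monoid_alg (restr A f).
Proof. by move=> finf; apply: sub_finite_set finf => s /fsupport_patch0 []. Qed.

Lemma monoid_alg_patch0_finite (A : set S) (f : S -> R) :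
  finite_set A -> monoid_alg (restr A f).
Proof. by move=> finA; apply: sub_finite_set finA => s /fsupport_patch0 []. Qed.

Lemma gps_patch0 le (A : set S) (f : S -> R) : gps le f -> gps le (restr A f).
Proof.
have supp_sub : fsupport (restr A f) `<=` fsupport f by move=> s /fsupport_patch0 [].
by move=> [artf narf]; split; [apply: artinian_sub artf | apply: narrow_sub narf].
Qed.

(* At [w], the identity for [x] and [y] is the identity for their truncations
   to the coordinates of the finitely many pairs in [conv_support x y w]. *)
Lemma rota_baxter_patch0_gps le (A : set S) : strictly_ordered_monoid le ->
  rota_baxter_op (@monoid_alg S R) (@conv S R) (restr A) ->
  rota_baxter_op (@gps S R le) (@conv S R) (restr A).
Proof.
move=> som [_ _ rb_id]; split=> [x|a x y _ _|x y gx gy].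
- exact: gps_patch0.
- exact: patch0_lin.
apply/funext => w /=; pose X := conv_support x y w.
have finX : finite_set X := gps_conv_support_finite som w gx gy.
have trunc F G : fsupport F `<=` fsupport x -> fsupport G `<=` fsupport y ->
    conv (restr X.`1 F) (restr X.`2 G) w = conv F G w.
  move=> Fx Gy; apply: conv_patch => -[u v] [e [nzF nzG]].
  have Xuv : X (u, v) by split=> //; split; [apply: Fx | apply: Gy].
  by split; [exists v | exists u].
have := congr1 (fun h => h w) (rb_id _ _
  (monoid_alg_patch0_finite x (finite_set_fst finX))
  (monoid_alg_patch0_finite y (finite_set_snd finX))) => /=.
by rewrite ![restr A (restr _ _)]patchC0 !patch0E !trunc // => s /fsupport_patch0 [].
Qed.
End Restriction.

Lemma proj12E (S : Type) (R : nmodType) (S1 S2 : set S) :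
  proj12 S1 S2 = patch (fun=> (0 : R)) S1.
Proof. by []. Qed.

Theorem corollary2p3 (R : comPzRingType) (S : nmodType) (le : S -> S -> Prop)
    (S1 S2 : set S) :
  strictly_ordered_monoid le ->
  S1 `&` S2 = set0 -> S1 `|` S2 = setT ->
  (rota_baxter_op (@monoid_alg S R) (@conv S R) (proj12 S1 S2) <->
   rota_baxter_op (@gps S R le) (@conv S R) (proj12 S1 S2)).
Proof.
(* [proj12] only consults [S1]. *)
move=> som _ _; rewrite proj12E; split; first exact: rota_baxter_patch0_gps.
apply: rota_baxter_op_sub => x; first exact: monoid_alg_gps.
exact: monoid_alg_patch0.
Qed.
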